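(* Let $r,u$ be positive integers with $\min\{r,u\}>1$, $q$ a prime power, and $j$ a positive integer. If there exists a block totally nonsingular array $\mathbf{A}\in\mathrm{GL}(\mathbb{F}_q,j)^{r\times u}$, then $j\ge\lceil\max\{\log_q(r+1),\log_q(u+1)\}\rceil$.
   Context: $\mathrm{GL}(\mathbb{F},j)$ is the set of invertible $j\times j$ matrices over $\mathbb{F}$. An $r\times u$ block array $\mathbf{A}=[A_{i,k}]_{i\in[r],k\in[u]}$ with each $A_{i,k}\in\mathrm{GL}(\mathbb{F},j)$ is block totally nonsingular if for all $S\subseteq[r]$, $S'\subseteq[u]$ with $|S|=|S'|$, the $j|S|\times j|S'|$ matrix $[A_{i,k}]_{i\in S,k\in S'}$ is nonsingular. *)

From HB Require Import structures.
From mathcomp Require Import all_boot all_order all_algebra all_fingroup all_field.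
Set Implicit Arguments. Unset Strict Implicit. Unset Printing Implicit Defensive.
Import GRing.Theory.
Local Open Scope ring_scope.

Definition block_sub (F : fieldType) (r u j k : nat)
  (A : 'I_r -> 'I_u -> 'M[F]_j) (f : 'I_k -> 'I_r) (g : 'I_k -> 'I_u)
  : 'M[F]_(\sum_(a < k) j) :=
  \mxblock_(a < k, b < k) A (f a) (g b).

(* Strictly increasing index maps = sorted enumerations of k-subsets. *)
Definition incr_idx (k n : nat) (f : 'I_k -> 'I_n) : Prop :=
  forall a b : 'I_k, (a < b)%N -> (f a < f b)%N.

Definition block_totally_nonsingular (F : fieldType) (r u j : nat)
  (A : 'I_r -> 'I_u -> 'M[F]_j) : Prop :=
  (forall i l, A i l \in unitmx) /\
  (forall (k : nat) (f : 'I_k -> 'I_r) (g : 'I_k -> 'I_u),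
      incr_idx f -> incr_idx g -> block_sub A f g \in unitmx).

From HB Require Import structures.
From mathcomp Require Import all_boot all_order all_algebra all_fingroup all_field.
Set Implicit Arguments. Unset Strict Implicit. Unset Printing Implicit Defensive.
Import GRing.Theory.
Local Open Scope ring_scope.

(* Fix the rows 0 and 1. For every column l the block 2 x 2 minors on these rows
   force the matrices N_l := A_{0,l} A_{1,l}^-1 to be invertible with pairwise
   invertible differences, so v N_l, for a fixed nonzero row vector v, gives u
   distinct nonzero vectors of F^j: u < q^j. Transposing every block swaps the
   roles of rows and columns and gives r < q^j. *)

Lemma card_lt_unit_differences (F : finFieldType) (j n : nat)
    (M : 'I_n -> 'M[F]_j) :
  (0 < j)%N -> (forall i, M i \in unitmx) ->
  (forall i i' : 'I_n, (i < i')%N -> M i - M i' \in unitmx) -> (n < #|F| ^ j)%N.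
Proof.
move=> j_gt0 M_unit M_diff.
pose v : 'rV[F]_j := const_mx 1.
have v_neq0 : v != 0.
  by apply/eqP => /matrixP/(_ 0 (Ordinal j_gt0)); rewrite !mxE; apply/eqP/oner_neq0.
have unit_kernel0 (U : 'M[F]_j) : U \in unitmx -> v *m U != 0.
  move=> U_unit; apply: contra v_neq0 => /eqP vU0.
  by rewrite -(mulmxK U_unit v) vU0 mul0mx.
pose f i := v *m M i.
have f_inj : injective f.
  suff lt_neq (i i' : 'I_n) : (i < i')%N -> f i != f i'.
    by move=> i i' fE; case: (ltngtP i i') => [/lt_neq|/lt_neq|/val_inj //];
      rewrite fE eqxx.
  by move=> lt_ii'; rewrite -subr_eq0 /f -mulmxBr; apply/unit_kernel0/M_diff.
have f_neq0 : [seq f i | i in 'I_n] \subset predC1 0.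
  by apply/subsetP => _ /imageP[i _ ->]; apply/unit_kernel0/M_unit.
have := subset_leq_card f_neq0.
rewrite card_image // cardC1 card_mx card_ord mul1n.
have : (0 < #|F| ^ j)%N by rewrite expn_gt0; apply/orP; left; apply/card_gt0P; exists 0.
by case: (#|F| ^ j)%N.
Qed.

(* Schur complement: if x (B00 B10^-1 - B01 B11^-1) = 0, then (x, - x B00 B10^-1)
   is in the left kernel of the block matrix. *)
Lemma mxblock2_unit_diff (F : fieldType) (j : nat) (B : 'I_2 -> 'I_2 -> 'M[F]_j) :
  \mxblock_(a < 2, b < 2) B a b \in unitmx ->
  B 1 0 \in unitmx -> B 1 1 \in unitmx ->
  B 0 0 *m invmx (B 1 0) - B 0 1 *m invmx (B 1 1) \in unitmx.
Proof.
move=> B_unit B10_unit B11_unit; rewrite -row_free_unit; apply: inj_row_free => x.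
move/eqP; rewrite mulmxBr subr_eq0 => /eqP xE.
pose y : 'M[F]_(1, \sum_(a < 2) j) :=
  \mxrow_(a < 2) (if a == 0 then x else - (x *m (B 0 0 *m invmx (B 1 0)))).
have y_ker : y *m \mxblock_(a < 2, b < 2) B a b = 0.
  rewrite mul_mxrow_mxblock -(mxrow0 (q_ := fun _ : 'I_2 => j)).
  apply: eq_mxrow => b; rewrite !big_ord_recl big_ord0 addr0 /=.
  have -> : lift ord0 ord0 = 1 :> 'I_2 by apply: val_inj.
  have [->|->] : b = 0 \/ b = 1 by case: b => -[|[|//]] ?; [left|right]; apply: val_inj.
    by rewrite mulNmx -!mulmxA mulVmx // mulmx1 addrN.
  by rewrite xE mulNmx -!mulmxA mulVmx // mulmx1 addrN.
have /(congr1 (fun z => submxrow z (0 : 'I_2))) : y = 0.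
  by rewrite -(mulmxK B_unit y) y_ker mul0mx.
by rewrite mxrowK submxrow0.
Qed.

Definition idx2 (n : nat) (x y : 'I_n) : 'I_2 -> 'I_n :=
  fun a => if a == 0 then x else y.

Lemma incr_idx2 (n : nat) (x y : 'I_n) : (x < y)%N -> incr_idx (idx2 x y).
Proof. by move=> xy [[|[|a]] Ha] [[|[|b]] Hb]. Qed.

Lemma block_totally_nonsingular_tr (F : fieldType) (r u j : nat)
    (A : 'I_r -> 'I_u -> 'M[F]_j) :
  block_totally_nonsingular A ->
  block_totally_nonsingular (fun l i => (A i l)^T).
Proof.
move=> [A_unit A_minor]; split=> [i l|k g f g_incr f_incr].
  by rewrite unitmx_tr.
by rewrite /block_sub -tr_mxblock unitmx_tr A_minor.
Qed.

Lemma block_totally_nonsingular_ncols_lt (F : finFieldType) (r u j : nat)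
    (A : 'I_r -> 'I_u -> 'M[F]_j) :
  (1 < r)%N -> (0 < j)%N -> block_totally_nonsingular A -> (u < #|F| ^ j)%N.
Proof.
move=> r_gt1 j_gt0 [A_unit A_minor].
pose i0 : 'I_r := Ordinal (ltnW r_gt1); pose i1 : 'I_r := Ordinal r_gt1.
apply: (@card_lt_unit_differences F j u (fun l => A i0 l *m invmx (A i1 l))) => //.
  by move=> l; rewrite unitmx_mul unitmx_inv !A_unit.
move=> l l' lt_ll'.
have := A_minor 2%N (idx2 i0 i1) (idx2 l l')
  (@incr_idx2 r i0 i1 (ltnSn 0)) (incr_idx2 lt_ll').
by move/(@mxblock2_unit_diff _ _ (fun a b => A (idx2 i0 i1 a) (idx2 l l' b))); apply.
Qed.

Theorem mainTheorem11 (F : finFieldType) (q : nat) (hq : #|F| = q)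
  (r u j : nat) (hr : (0 < r)%N) (hu : (0 < u)%N) (hru : (1 < minn r u)%N)
  (hj : (0 < j)%N)
  (A : 'I_r -> 'I_u -> 'M[F]_j) :
  block_totally_nonsingular A ->
  (up_log q (maxn r.+1 u.+1) <= j)%N.
Proof.
move=> A_btn; move: hru; rewrite leq_min => /andP[r_gt1 u_gt1].
have q_gt1 : (1 < q)%N.
  by rewrite -hq; apply/card_gt1P; exists 0, 1; rewrite eq_sym oner_neq0.
apply: up_log_min => //; rewrite geq_max -hq; apply/andP; split.
  exact: block_totally_nonsingular_ncols_lt (block_totally_nonsingular_tr A_btn).
exact: block_totally_nonsingular_ncols_lt A_btn.
Qed.
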